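(* Let $G$ be a bipartite graph with bipartition $(X,Y)$ such that $|X|=|Y|=m\ge1$, and suppose there is a numbering $f$ of $G$ with $f(X)=[1,m]$. Then there is a numbering $F$ of $G\times K_2$ such that $F^{-1}([1,2m])=\widetilde X$ for one part $\widetilde X$ of a bipartition $(\widetilde X,\widetilde Y)$ of $G\times K_2$, and $str_F(G\times K_2)=5m+1$.
   Context: $G\times K_2$ denotes the Cartesian product of $G$ with the complete graph $K_2$. For a graph $G$ of order $p$, a numbering is a bijection $f:V(G)\to[1,p]$, where $[a,b]$ is the set of integers from $a$ to $b$; $str_f(G)=\max\{f(u)+f(v): uv\in E(G)\}$. *)

From mathcomp Require Import all_boot.
Set Implicit Arguments. Unset Strict Implicit. Unset Printing Implicit Defensive.

Definition simple_graph (V : finType) (e : rel V) : Prop :=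
  symmetric e /\ irreflexive e.

Definition is_bipartition (V : finType) (e : rel V) (A B : {set V}) : Prop :=
  [/\ A :&: B = set0, A :|: B = [set: V] &
      forall u v, e u v -> (u \in A) && (v \in B) || (u \in B) && (v \in A)].

Definition cartK2 (V : finType) (e : rel V) : rel (V * bool) :=
  fun p q => ((p.1 == q.1) && (p.2 != q.2)) || ((p.2 == q.2) && e p.1 q.1).

Definition numbering (V : finType) (f : V -> nat) : Prop :=
  injective f /\ (forall v, 1 <= f v <= #|V|).

Definition strength (V : finType) (e : rel V) (f : V -> nat) : nat :=
  \max_(u : V) \max_(v : V | e u v) (f u + f v).

From mathcomp Require Import all_boot.
From mathcomp Require Import zify.
Set Implicit Arguments. Unset Strict Implicit. Unset Printing Implicit Defensive.

(* Let (X, Y) be the bipartition of G and f a numbering of G with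
   f(X) = [1, m], so that f(Y) = [m+1, 2m].  Number the two copies G x {0} and
   G x {1} of G inside G x K_2 by
     (x, 0) |-> f x          in [1, m]      (x in X)
     (y, 1) |-> f y          in [m+1, 2m]   (y in Y)
     (x, 1) |-> 2m + f x     in [2m+1, 3m]  (x in X)
     (y, 0) |-> 5m + 1 - f y in [3m+1, 4m]  (y in Y).
   Each of the four classes fills a block of m consecutive labels, which makes
   the labelling a bijection onto [1, 4m]; the labels <= 2m are exactly the
   vertices (x, 0) and (y, 1), one side of the natural bipartition of
   G x K_2.  Edges inside a copy have label sum <= 5m, the rung (x,0)(x,1) has
   sum 2 f x + 2m <= 4m, and every rung (y,0)(y,1) has sum exactly 5m + 1.
   The file first collects general facts on bipartitions, on strength and on
   blocks of consecutive integers, then studies the labelling above for an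
   arbitrary numbering splitting at m, and finally assembles the theorem. *)

Lemma bipartition_complement (V : finType) (e : rel V) (X Y : {set V}) :
  is_bipartition e X Y -> Y = ~: X.
Proof.
case=> XY0 XYT _; apply/setP => v; rewrite inE.
have : v \in X :|: Y by rewrite XYT inE.
have : v \notin X :&: Y by rewrite XY0 inE.
by rewrite !inE; case: (v \in X); case: (v \in Y).
Qed.

Lemma bipartition_edge (V : finType) (e : rel V) (X Y : {set V}) (u v : V) :
  is_bipartition e X Y -> e u v -> (u \in X) = (v \notin X).
Proof.
move=> bip; have YC := bipartition_complement bip.
case: bip => _ _ crossing /crossing.
by rewrite YC !inE; case: (u \in X); case: (v \in X).
Qed.

Lemma bipartition_card (V : finType) (e : rel V) (X Y : {set V}) :
  is_bipartition e X Y -> #|V| = #|X| + #|Y|.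
Proof.
case=> XY0 XYT _.
by rewrite -cardsT -XYT cardsU XY0 cards0 subn0.
Qed.

Lemma cartK2_bipartition (V : finType) (e : rel V) (X Y : {set V}) :
  is_bipartition e X Y ->
  is_bipartition (cartK2 e) [set w | (w.1 \in X) != w.2]
                            [set w | (w.1 \in X) == w.2].
Proof.
move=> bip; split.
- by apply/setP => w; rewrite !inE; case: eqP.
- by apply/setP => w; rewrite !inE; case: eqP.
- move=> [u a] [v b]; rewrite /cartK2 !inE /=.
  case/orP => /andP[/eqP <-]; first by case: a; case: b; case: (u \in X).
  move/(bipartition_edge bip) => -> /=.
  by case: a; case: (v \in X).
Qed.

Lemma strength_eq (V : finType) (e : rel V) (F : V -> nat) (s : nat) (u0 v0 : V) :
  (forall u v, e u v -> F u + F v <= s) -> e u0 v0 -> F u0 + F v0 = s ->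
  strength e F = s.
Proof.
move=> bound e_uv0 sum_uv0; apply/eqP; rewrite eqn_leq; apply/andP; split.
  by apply/bigmax_leqP => u _; apply/bigmax_leqP => v; exact: bound.
rewrite -{1}sum_uv0; apply: leq_trans (leq_bigmax_cond u0 isT).
exact: leq_bigmax_cond v0 e_uv0.
Qed.

Lemma same_block (m n i j : nat) :
  m * i < n <= m * i + m -> m * j < n <= m * j + m -> i = j.
Proof.
wlog lt_ij : i j / i < j.
  move=> H hi hj; case: (ltngtP i j) => [lt|lt|//]; first exact: H.
  by apply/esym/H.
move=> /andP[_ hi] /andP[hj _].
have : m * i.+1 <= m * j by rewrite leq_mul2l lt_ij orbT.
lia.
Qed.

Lemma numbering_above_part (V : finType) (X : {set V}) (m : nat) (f : V -> nat) :
  numbering f -> #|V| = 2 * m ->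
  (forall i, (1 <= i <= m) <-> (exists2 x, x \in X & f x = i)) ->
  forall v, v \notin X -> m < f v.
Proof.
move=> [f_inj f_rng] cV f_onto v vX; rewrite ltnNge; apply/negP => f_le.
have [x xX fxv] : exists2 x, x \in X & f x = f v.
  by apply/f_onto; have := f_rng v; lia.
by move: vX; rewrite -(f_inj _ _ fxv) xX.
Qed.

Section PrismLabelling.

Variables (V : finType) (X : {set V}) (m : nat) (f : V -> nat).
Hypothesis f_inj : injective f.
Hypothesis f_range : forall v, 1 <= f v <= 2 * m.
Hypothesis f_X : forall v, v \in X -> f v <= m.
Hypothesis f_notX : forall v, v \notin X -> m < f v.

Definition prism_label (w : V * bool) : nat :=
  let: (v, top) := w in
  if v \in X then (if top then 2 * m + f v else f v)
  else (if top then f v else 5 * m + 1 - f v).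

(* Index of the block of m labels used by the class of a vertex. *)
Definition block_index (inX top : bool) : nat :=
  if inX then (if top then 2 else 0) else (if top then 1 else 3).

Lemma block_index_inj (a b c d : bool) :
  block_index a b = block_index c d -> a = c /\ b = d.
Proof. by case: a; case: b; case: c; case: d. Qed.

Lemma prism_label_block (w : V * bool) :
  let k := block_index (w.1 \in X) w.2 in
  m * k < prism_label w <= m * k + m.
Proof.
case: w => v top /=; have := f_range v.
by case: (boolP (v \in X)) => vX;
  [have := f_X vX | have := f_notX vX]; case: top => /=; lia.
Qed.

(* Labels determine the class (disjoint blocks), then the vertex (f is
   injective). *)
Lemma prism_label_inj : injective prism_label.
Proof.
move=> [u a] [v b] Euv.
have [Ein Eab] : (u \in X) = (v \in X) /\ a = b.
  apply: block_index_inj; apply: same_block (prism_label_block (u, a)) _.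
  by rewrite Euv; exact: (prism_label_block (v, b)).
(* Within one block the label is a shift or a reflection of f. *)
suff /f_inj -> : f u = f v by rewrite Eab.
move: Euv; rewrite /= -Ein -{}Eab; have := f_range u; have := f_range v.
by case: (u \in X); case: a; lia.
Qed.

Lemma prism_label_range (w : V * bool) : 1 <= prism_label w <= 4 * m.
Proof.
have := prism_label_block w.
by case: (w.1 \in X); case: w.2 => /=; lia.
Qed.

Lemma prism_label_low (w : V * bool) :
  (prism_label w <= 2 * m) = ((w.1 \in X) != w.2).
Proof.
have := prism_label_block w.
by case: (w.1 \in X); case: w.2 => /= bw; apply/idP/idP => //; lia.
Qed.

Lemma prism_edge_sum (e : rel V) (p q : V * bool) :
  (forall u v, e u v -> (u \in X) = (v \notin X)) ->
  cartK2 e p q -> prism_label p + prism_label q <= 5 * m + 1.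
Proof.
move=> crossing; case: p q => [u a] [v b]; rewrite /cartK2 /=.
case/orP => /andP[/eqP <-].
  have := f_range u; case: (boolP (u \in X)) => uX;
    [have := f_X uX | have := f_notX uX]; by case: a; case: b => //= *; lia.
move=> euv; have uX := crossing u v euv; rewrite uX.
have := f_range u; have := f_range v.
case: (boolP (v \in X)) => vX; rewrite vX /= in uX *.
  by have := f_X vX; have := f_notX (negbT uX); case: a; lia.
by have := f_X uX; have := f_notX vX; case: a; lia.
Qed.

Lemma prism_rung_outside (v : V) :
  v \notin X -> prism_label (v, false) + prism_label (v, true) = 5 * m + 1.
Proof.
move=> vX; rewrite /= (negbTE vX); have := f_range v; lia.
Qed.

End PrismLabelling.

Theorem mainTheorem14 (V : finType) (e : rel V) (X Y : {set V}) (m : nat) :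
  simple_graph e ->
  is_bipartition e X Y ->
  #|X| = m -> #|Y| = m -> 1 <= m ->
  (exists f : V -> nat, numbering f /\
     (forall i, (1 <= i <= m) <-> (exists2 x, x \in X & f x = i))) ->
  exists F : V * bool -> nat,
    numbering F /\
    (exists Xt Yt : {set V * bool},
        is_bipartition (cartK2 e) Xt Yt /\
        (forall w, w \in Xt <-> 1 <= F w <= 2 * m)) /\
    strength (cartK2 e) F = 5 * m + 1.
Proof.
move=> _ bip cX cY m_gt0 [f [f_num f_onto]].
have cV : #|V| = 2 * m by rewrite (bipartition_card bip) cX cY; lia.
have [f_inj f_rng] := f_num.
have f_range : forall v, 1 <= f v <= 2 * m by move=> v; rewrite -cV.
have f_X : forall v, v \in X -> f v <= m.
  by move=> v vX; have /andP[] : 1 <= f v <= m by apply/f_onto; exists v.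
have f_notX := numbering_above_part f_num cV f_onto.
have label_range := prism_label_range f_range f_X f_notX.
exists (prism_label X m f); split; [split | split].
- exact: prism_label_inj f_inj f_range f_X f_notX.
- by move=> w; rewrite card_prod card_bool cV; have := label_range w; lia.
- exists [set w | (w.1 \in X) != w.2], [set w | (w.1 \in X) == w.2].
  split; first exact: cartK2_bipartition bip.
  move=> w; rewrite inE -(prism_label_low f_range f_X f_notX).
  by have := label_range w; split; lia.
- have [y yY] : exists y, y \in Y by apply/set0Pn; rewrite -card_gt0 cY.
  have yX : y \notin X by rewrite -in_setC -(bipartition_complement bip).
  apply: (strength_eq _ (u0 := (y, false)) (v0 := (y, true))).
  + move=> p q; apply: (prism_edge_sum f_range f_X f_notX (e := e) (p := p)).
    by move=> u v; exact: bipartition_edge bip.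
  + by rewrite /cartK2 /= eqxx.
  + exact: prism_rung_outside.
Qed.
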